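(* Let $F/\mathbb{Q}$ be a totally real number field of degree $n$ with ring of integers $R$, and let $H=\left(\frac{a,b}{F}\right)$, with $a,b\in R\setminus\{0\}$, be a quaternion $F$-algebra which is a division algebra and satisfies $H\otimes_{\mathbb{Q}}\mathbb{R}\cong\mathrm{M}(2,\mathbb{R})\times\mathbb{H}^{n-1}$. Then any Fuchsian code associated to the natural order $R[1,I,J,K]$ has code rate at least $3n$.
   Context: $H=\left(\frac{a,b}{F}\right)$ is the $F$-algebra with basis $1,I,J,K$ and relations $I^2=a$, $J^2=b$, $K=IJ=-JI$, with reduced norm $\mathrm{N}(x+yI+zJ+tK)=x^2-ay^2-bz^2+abt^2$; $\mathbb{H}$ denotes Hamilton's quaternions. The natural order is $\mathcal{O}=R+RI+RJ+RK$ (an $R$-order since $a,b\in R$). Viewing $F\subset\mathbb{R}$ via an embedding with $a>0$, let $\phi(x+yI+zJ+tK)=\begin{pmatrix} x+y\sqrt a & z+t\sqrt a\\ b(z-t\sqrt a) & x-y\sqrt a\end{pmatrix}$ and $\Gamma=\phi(\mathcal{O}^*_+)$, where $\mathcal{O}^*_+$ is the group of units of $\mathcal{O}$ with positive reduced norm; $\Gamma$ acts on the upper half-plane $\mathcal{H}$ by Möbius transformations. A fundamental domain for $\Gamma$ is a closed hyperbolic polygon $\mathcal{F}\subset\mathcal{H}$ such that no two distinct interior points are $\Gamma$-equivalent (and only $\pm\mathrm{Id}$ fixes an interior point) and every point of $\mathcal{H}$ is $\Gamma$-equivalent to a point of $\mathcal{F}$. A Fuchsian code associated to $\Gamma$ is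 $\mathcal{C}=\{\pm g(\tau): g\in S\}\subset\mathbb{C}$ for a fundamental domain $\mathcal{F}$, a finite set $S\subset\Gamma$ and an interior point $\tau$ of $\mathcal{F}$. Code rate: fix a $\mathbb{Z}$-basis $\theta_1=1,\dots,\theta_n$ of $R$, write $x=\sum_k x_k\theta_k$, and similarly $y,z,t$ with indeterminate integer coordinates $y_k,z_k,t_k$; then $x^2-ay^2-bz^2+abt^2=\sum_{k=1}^n g_k\theta_k$ with $g_k\in\mathbb{Z}[x_1,\dots,t_n]$. The algebraic set $A(\Gamma)\subset\mathbb{C}^{4n}$ is defined by $g_1=1$, $g_k=0$ ($2\le k\le n$), and the code rate of a Fuchsian code attached to $\Gamma$ is $\dim A(\Gamma)$. *)

From HB Require Import structures.
From mathcomp Require Import all_boot all_order all_algebra all_field.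
From mathcomp Require Import complex.
From mathcomp Require Import mpoly.
From Stdlib Require Import Rdefinitions.
From mathcomp Require Import Rstruct.

Set Implicit Arguments.
Unset Strict Implicit.
Unset Printing Implicit Defensive.
Import Order.TTheory GRing.Theory Num.Theory.
Local Open Scope ring_scope.

(* Quaternion algebras (a,b / K) on the basis 1, I, J, K:              *)
(*   I^2 = a, J^2 = b, K = IJ = -JI.                                  *)
Record quat (K : Type) := Quat { q1 : K; qI : K; qJ : K; qK : K }.

Definition qzero (K : comNzRingType) : quat K := Quat 0 0 0 0.
Definition qone (K : comNzRingType) : quat K := Quat 1 0 0 0.
Definition qadd (K : comNzRingType) (u v : quat K) : quat K :=
  Quat (q1 u + q1 v) (qI u + qI v) (qJ u + qJ v) (qK u + qK v).
Definition qscale (K : comNzRingType) (c : K) (u : quat K) : quat K :=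
  Quat (c * q1 u) (c * qI u) (c * qJ u) (c * qK u).
Definition qmul (K : comNzRingType) (a b : K) (u v : quat K) : quat K :=
  let: Quat x1 y1 z1 t1 := u in
  let: Quat x2 y2 z2 t2 := v in
  Quat (x1 * x2 + a * y1 * y2 + b * z1 * z2 - a * b * t1 * t2)
       (x1 * y2 + y1 * x2 + b * t1 * z2 - b * z1 * t2)
       (x1 * z2 + z1 * x2 + a * y1 * t2 - a * t1 * y2)
       (x1 * t2 + t1 * x2 + y1 * z2 - z1 * y2).

Definition quat_division (K : comNzRingType) (a b : K) : Prop :=
  forall u : quat K, u <> qzero K ->
    exists v : quat K, qmul a b u v = qone K /\ qmul a b v u = qone K.

Definition real_quat_iso_M2 (al be : R) : Prop :=
  exists f : quat R -> 'M[R]_2,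
    [/\ bijective f,
        forall u v, f (qadd u v) = f u + f v,
        forall c u, f (qscale c u) = c *: f u,
        forall u v, f (qmul al be u v) = f u *m f v
      & f (qone R) = 1%:M].

Definition real_quat_iso_Hamilton (al be : R) : Prop :=
  exists f : quat R -> quat R,
    [/\ bijective f,
        forall u v, f (qadd u v) = qadd (f u) (f v),
        forall c u, f (qscale c u) = qscale c (f u),
        forall u v, f (qmul al be u v) = qmul (-1) (-1) (f u) (f v)
      & f (qone R) = qone R].

Definition ring_of_integers (F : fieldType) (x : F) : Prop :=
  exists p : {poly int}, p \is monic /\ root (map_poly intr p) x.

Definition Zbasis_of_integers (F : fieldType) (n : nat) (theta : 'I_n -> F) :
  Prop :=
  [/\ forall i, ring_of_integers (theta i),
      forall r, ring_of_integers r ->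
        exists c : 'I_n -> int, r = \sum_(i < n) (c i)%:~R * theta i
    & forall c : 'I_n -> int,
        \sum_(i < n) (c i)%:~R * theta i = 0 -> forall i, c i = 0].

Definition totally_real (F : fieldType) : Prop :=
  forall (sigma : {rmorphism F -> R[i]}) (x : F), Im (sigma x) = 0.

Definition CC := R[i].

Definition zariski_closed (N : nat) (Z : ('I_N -> CC) -> Prop) : Prop :=
  exists P : {mpoly CC[N]} -> Prop,
    forall v, Z v <-> (forall p, P p -> p.@[v] = 0).

Definition zariski_irreducible (N : nat) (Z : ('I_N -> CC) -> Prop) : Prop :=
  [/\ zariski_closed Z, exists v, Z v &
      forall Z1 Z2 : ('I_N -> CC) -> Prop,
        zariski_closed Z1 -> zariski_closed Z2 ->
        (forall v, Z v -> Z1 v \/ Z2 v) ->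
        (forall v, Z v -> Z1 v) \/ (forall v, Z v -> Z2 v)].

(* dim V >= d : there is a chain Z_0 < Z_1 < ... < Z_d of irreducible
   closed subsets of V (V an algebraic set; Krull/topological dimension). *)
Definition alg_dim_ge (N : nat) (V : ('I_N -> CC) -> Prop) (d : nat) : Prop :=
  exists Z : nat -> ('I_N -> CC) -> Prop,
    [/\ forall i, leq i d -> zariski_irreducible (Z i),
        forall i, leq i d -> forall v, Z i v -> V v,
        forall i, leq i.+1 d -> forall v, Z i v -> Z i.+1 v
      & forall i, leq i.+1 d -> exists v, Z i.+1 v /\ ~ Z i v].

(* variable index: coordinate block c (0 = x, 1 = y, 2 = z, 3 = t),
   position i; so the variables are x_i, y_i, z_i, t_i in 'I_(4*n). *)
Definition qvar (n : nat) (c : 'I_4) (i : 'I_n) : 'I_(4 * n) := mxvec_index c i.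

Definition generic_coord (F : fieldType) (n : nat) (theta : 'I_n -> F)
  (c : 'I_4) : {mpoly F[4 * n]} :=
  \sum_(i < n) 'X_(qvar c i) * (theta i)%:MP.

Definition generic_norm (F : fieldType) (n : nat) (theta : 'I_n -> F)
  (a b : F) : {mpoly F[4 * n]} :=
  let X c := generic_coord theta c in
  X 0 ^+ 2 - a%:MP * X 1 ^+ 2 - b%:MP * X 2 ^+ 2 + (a * b)%:MP * X 3 ^+ 2.

Definition norm_components (F : fieldType) (n : nat) (theta : 'I_n -> F)
  (a b : F) (g : 'I_n -> {mpoly int[4 * n]}) : Prop :=
  \sum_(k < n) map_mpoly intr (g k) * (theta k)%:MP = generic_norm theta a b.

Definition A_Gamma (n : nat) (g : 'I_n -> {mpoly int[4 * n]})
  : ('I_(4 * n) -> CC) -> Prop :=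
  fun v => forall k : 'I_n,
    (map_mpoly intr (g k)).@[v] = (if (val k == O)%N then 1 else 0).

(* Choose n complex embeddings sigma_j of F whose matrix (sigma_j theta_k) is
   invertible.  Applying sigma_j to sum_k g_k theta_k = N shows that, after
   the invertible linear change of variables v |-> (sum_i v_(c,i)
   sigma_j(theta_i))_(c,j), A(Gamma) becomes the product over j of the
   quadrics x^2 - a_j y^2 - b_j z^2 + a_j b_j t^2 = 1.  Over C each of them is
   SL_2, which contains the image of a polynomial map from C^3.  So A(Gamma)
   contains the image of a polynomial map phi from C^(3n); the closures of the
   images of phi with all but the first i parameters set to 0 form a chain of
   3n + 1 irreducible closed sets, strictly increasing because each new
   parameter is detected by a polynomial. *)

From HB Require Import structures.
From mathcomp Require Import all_boot all_order all_algebra all_field.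
From mathcomp Require Import complex.
From mathcomp Require Import mpoly.
From Stdlib Require Import Rdefinitions.
From mathcomp Require Import Rstruct.
From mathcomp Require Import ring zify.
From Stdlib Require Import Classical FunctionalExtensionality.
Import Order.TTheory GRing.Theory Num.Theory.

Set Implicit Arguments.
Unset Strict Implicit.
Unset Printing Implicit Defensive.
Local Open Scope ring_scope.

Definition polyfun m (f : ('I_m -> CC) -> CC) :=
  exists q : {mpoly CC[m]}, forall u, f u = q.@[u].

Lemma polyfun_ext m (f h : ('I_m -> CC) -> CC) :
  f =1 h -> polyfun f -> polyfun h.
Proof. by move=> e [q hq]; exists q => u; rewrite -e. Qed.

Lemma polyfun_const m c : polyfun (fun _ : 'I_m -> CC => c).
Proof. by exists c%:MP => u; rewrite mevalC. Qed.

Lemma polyfun_proj m (k : 'I_m) : polyfun (fun u => u k).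
Proof. by exists 'X_k => u; rewrite mevalXU. Qed.

Lemma polyfun_add m (f h : ('I_m -> CC) -> CC) :
  polyfun f -> polyfun h -> polyfun (fun u => f u + h u).
Proof. by move=> [p hp] [q hq]; exists (p + q) => u; rewrite mevalD hp hq. Qed.

Lemma polyfun_sub m (f h : ('I_m -> CC) -> CC) :
  polyfun f -> polyfun h -> polyfun (fun u => f u - h u).
Proof. by move=> [p hp] [q hq]; exists (p - q) => u; rewrite mevalB hp hq. Qed.

Lemma polyfun_mul m (f h : ('I_m -> CC) -> CC) :
  polyfun f -> polyfun h -> polyfun (fun u => f u * h u).
Proof. by move=> [p hp] [q hq]; exists (p * q) => u; rewrite mevalM hp hq. Qed.

Lemma polyfun_sum m (I : finType) (f : I -> ('I_m -> CC) -> CC) :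
  (forall i, polyfun (f i)) -> polyfun (fun u => \sum_i f i u).
Proof.
move=> h; have [Q hQ] := fin_all_exists h.
by exists (\sum_i Q i) => u; rewrite raddf_sum; apply: eq_bigr => i _; apply: hQ.
Qed.

Lemma polyfun_meval_comp m N (phi : ('I_m -> CC) -> 'I_N -> CC) (p : {mpoly CC[N]}) :
  (forall l, polyfun (phi^~ l)) -> polyfun (fun u => p.@[phi u]).
Proof.
move=> h; have [Q hQ] := fin_all_exists h.
exists (p \mPo [tuple Q l | l < N]) => u.
by rewrite comp_mpoly_meval; apply: meval_eq => l; rewrite tnth_mktuple hQ.
Qed.

Lemma meval_line (K : comNzRingType) m (q : {mpoly K[m]}) (u1 u2 : 'I_m -> K) :
  exists P : {poly K}, forall t, q.@[fun k => u1 k + t * (u2 k - u1 k)] = P.[t].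
Proof.
exists (\sum_(mm <- msupp q) (q@_mm)%:P *
   \prod_(i < m) ((u1 i)%:P + 'X * (u2 i - u1 i)%:P) ^+ mm i) => t.
rewrite mevalE horner_sum; apply: eq_bigr => mm _.
rewrite hornerM hornerC horner_prod; congr (_ * _); apply: eq_bigr => i _.
by rewrite horner_exp hornerD hornerM hornerX !hornerC.
Qed.

(* Restricting to the line through two points reduces this to the
   infinitude of K. *)
Lemma mpoly_common_nonroot (K : closedFieldType) m (q1 q2 : {mpoly K[m]})
    (u1 u2 : 'I_m -> K) :
  q1.@[u1] != 0 -> q2.@[u2] != 0 -> exists u, q1.@[u] != 0 /\ q2.@[u] != 0.
Proof.
move=> nz1 nz2; pose line t k := u1 k + t * (u2 k - u1 k).
have line0 (q : {mpoly K[m]}) : q.@[line 0] = q.@[u1].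
  by apply: meval_eq => k; rewrite /line mul0r addr0.
have line1 (q : {mpoly K[m]}) : q.@[line 1] = q.@[u2].
  by apply: meval_eq => k; rewrite /line mul1r addrC subrK.
have [L1 eL1] := meval_line q1 u1 u2; have [L2 eL2] := meval_line q2 u1 u2.
have nzL1 : L1 != 0 by apply: contraNneq nz1 => L10; rewrite -line0 eL1 L10 horner0.
have nzL2 : L2 != 0 by apply: contraNneq nz2 => L20; rewrite -line1 eL2 L20 horner0.
have /closed_nonrootP[t] := mulf_neq0 nzL1 nzL2.
by rewrite /root hornerM mulf_eq0 negb_or => /andP[t1 t2]; exists (line t); rewrite eL1 eL2.
Qed.

Lemma zariski_closed_separate N (Z : ('I_N -> CC) -> Prop) v :
  zariski_closed Z -> ~ Z v ->
  exists p : {mpoly CC[N]}, (forall w, Z w -> p.@[w] = 0) /\ p.@[v] != 0.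
Proof.
move=> [P hP] nZv; apply: NNPP => nsep; apply/nZv/hP => p Pp.
apply: NNPP => /eqP pv; apply: nsep; exists p; split=> // w /hP; exact.
Qed.

Definition image_closure m N (phi : ('I_m -> CC) -> 'I_N -> CC) v :=
  forall p : {mpoly CC[N]}, (forall u, p.@[phi u] = 0) -> p.@[v] = 0.

Lemma image_closure_img m N (phi : ('I_m -> CC) -> 'I_N -> CC) u :
  image_closure phi (phi u).
Proof. by move=> p; apply. Qed.

Lemma image_closure_closed m N (phi : ('I_m -> CC) -> 'I_N -> CC) :
  zariski_closed (image_closure phi).
Proof. by exists (fun p => forall u, p.@[phi u] = 0). Qed.

Lemma image_closure_nonroot m N (phi : ('I_m -> CC) -> 'I_N -> CC) v p :
  image_closure phi v -> p.@[v] != 0 -> exists u, p.@[phi u] != 0.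
Proof.
move=> cv pv; apply: NNPP => hn; move/eqP: pv; apply; apply: cv => u.
by apply: NNPP => /eqP pu; apply: hn; exists u.
Qed.

Lemma image_closure_irreducible m N (phi : ('I_m -> CC) -> 'I_N -> CC) :
  (forall l, polyfun (phi^~ l)) -> zariski_irreducible (image_closure phi).
Proof.
move=> phiP; split; first exact: image_closure_closed.
  by exists (phi (fun=> 0)); apply: image_closure_img.
move=> Z1 Z2 cZ1 cZ2 cover.
have [[v1 cv1 nZv1]|allZ1] := classic (exists2 v, image_closure phi v & ~ Z1 v);
  last by left => v cv; apply: NNPP => nZv; apply: allZ1; exists v.
right => v2 cv2; apply: NNPP => nZv2.
have [p1 [Z1p1 p1v1]] := zariski_closed_separate cZ1 nZv1.
have [p2 [Z2p2 p2v2]] := zariski_closed_separate cZ2 nZv2.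
have [u1 p1u1] := image_closure_nonroot cv1 p1v1.
have [u2 p2u2] := image_closure_nonroot cv2 p2v2.
have [q1 eq1] := polyfun_meval_comp p1 phiP.
have [q2 eq2] := polyfun_meval_comp p2 phiP.
rewrite eq1 in p1u1; rewrite eq2 in p2u2.
have [u [q1u q2u]] := mpoly_common_nonroot p1u1 p2u2.
case: (cover (phi u) (image_closure_img u)) => [/Z1p1|/Z2p2].
  by rewrite eq1 => /eqP; rewrite (negPf q1u).
by rewrite eq2 => /eqP; rewrite (negPf q2u).
Qed.

Definition trunc_params m (i : nat) (u : 'I_m -> CC) : 'I_m -> CC :=
  fun k => if (val k < i)%nat then u k else 0.

Lemma trunc_paramsS m i (u : 'I_m -> CC) :
  trunc_params i.+1 (trunc_params i u) = trunc_params i u.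
Proof.
apply: functional_extensionality => k; rewrite /trunc_params.
by case: (ltnP k i) => [lt_ki|]; [rewrite ltnS ltnW | case: ifP].
Qed.

Lemma polyfun_trunc_params m i (k : 'I_m) : polyfun (fun u => trunc_params i u k).
Proof.
by rewrite /trunc_params; case: (val k < i)%nat; [apply: polyfun_proj | apply: polyfun_const].
Qed.

(* The witnessing chain is formed by the closures of the images of
   phi \o trunc_params i. *)
Lemma alg_dim_ge_param N m (V : ('I_N -> CC) -> Prop)
    (phi : ('I_m -> CC) -> 'I_N -> CC) :
  (forall l, polyfun (phi^~ l)) -> zariski_closed V -> (forall u, V (phi u)) ->
  (forall i : 'I_m, exists f, [/\ polyfun f,
     forall u, f (phi (trunc_params i u)) = 0 &
     f (phi (trunc_params i.+1 (fun=> 1))) != 0]) ->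
  alg_dim_ge V m.
Proof.
move=> phiP [P hP] Vphi sep.
exists (fun i => image_closure (fun u => phi (trunc_params i u))); split.
- move=> i _; apply: image_closure_irreducible => l.
  have [Q hQ] := phiP l.
  apply: polyfun_ext (polyfun_meval_comp Q (polyfun_trunc_params i)) => u.
  by rewrite hQ.
- move=> i _ v cv; apply/hP => p Pp; apply: cv => u.
  by move/hP: (Vphi (trunc_params i u)); apply.
- by move=> i _ v cv p hp; apply: cv => u; rewrite -trunc_paramsS.
move=> i lt_im; exists (phi (trunc_params i.+1 (fun=> 1))); split.
  exact: image_closure_img.
have [f [[q fq] f0 f1]] := sep (Ordinal lt_im).
move=> cv; move: f1; rewrite fq cv ?eqxx // => u; rewrite -fq; exact: f0.
Qed.

Lemma separable_generator_minpoly (F : fieldExtType rat) :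
  exists (z : F) (m0 : {poly rat}),
   [/\ fullv = <<1; z>>%VS, m0 \is monic, size m0 = (\dim {:F}).+1,
       separable_poly m0 &
       forall P : {poly rat}, (map_poly (in_alg F) P).[z] = 0 <-> m0 %| P].
Proof.
have pchF : [pchar F] =i pred0 by move=> p; rewrite (pchar_lalg F) pchar_num.
have sepF : separable 1 {:F}%AS.
  by apply/separableP => y _; apply: pcharf0_separable.
pose z := separable_generator 1 {:F}%AS.
have Ez : fullv = <<1; z>>%VS := eq_adjoin_separable_generator sepF (sub1v _).
have [m0 Dm0] := polyOver1P (minPolyOver 1 z).
exists z, m0; split => //.
- by rewrite -(map_monic (in_alg F)) -Dm0 monic_minPoly.
- by rewrite -(size_map_poly (in_alg F)) -Dm0 size_minPoly adjoin_degreeE -Ez dimv1 divn1.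
- by rewrite -(separable_map (in_alg F)) -Dm0; apply: pcharf0_separable.
move=> P; rewrite -(dvdp_map (in_alg F)) -Dm0; split => [Pz|].
  by apply: minPoly_dvdp; [apply: alg_polyOver | apply/rootP].
by move=> /dvdpP[D ->]; rewrite hornerM (rootP (root_minPoly _ _)) mulr0.
Qed.

Lemma separable_poly_roots (K : numClosedFieldType) (m0 : {poly rat}) n :
  m0 \is monic -> size m0 = n.+1 -> separable_poly m0 ->
  exists rs : seq K, [/\ size rs = n, uniq rs &
     forall r, r \in rs -> root (map_poly ratr m0) r].
Proof.
move=> mon sz sep.
have [rs Drs] := closed_field_poly_normal (map_poly (ratr : rat -> K) m0).
rewrite lead_coef_map (monicP mon) rmorph1 scale1r in Drs.
exists rs; split.
- by have := size_prod_XsubC rs id; rewrite -Drs size_map_poly sz => -[].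
- by rewrite -separable_prod_XsubC -Drs separable_map.
- by move=> r; rewrite Drs root_prod_XsubC.
Qed.

Lemma rmorph_of_root (F : fieldExtType rat) (K : numFieldType) (z : F)
    (m0 : {poly rat}) (Ez : fullv = <<1; z>>%VS)
    (m0z : forall P : {poly rat}, (map_poly (in_alg F) P).[z] = 0 -> m0 %| P)
    (r : K) (m0r : root (map_poly ratr m0) r) :
  exists sigma : {rmorphism F -> K},
    forall P : {poly rat}, sigma ((map_poly (in_alg F) P).[z]) = (map_poly ratr P).[r].
Proof.
have hpre (y : F) : exists P : {poly rat}, y == (map_poly (in_alg F) P).[z].
  have /Fadjoin1_polyP[P ->] : y \in <<1; z>>%VS by rewrite -Ez memvf.
  by exists P.
pose pre y := xchoose (hpre y).
have preK y : y = (map_poly (in_alg F) (pre y)).[z] by apply/eqP/(xchooseP (hpre y)).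
pose f y := (map_poly (ratr : rat -> K) (pre y)).[r].
have fE P : f ((map_poly (in_alg F) P).[z]) = (map_poly ratr P).[r].
  set y := _.[z]; have /dvdpP[D eD] : m0 %| P - pre y.
    by apply: m0z; rewrite raddfB /= hornerD hornerN -preK subrr.
  have : (map_poly (ratr : rat -> K) (P - pre y)).[r] = 0.
    by rewrite eD rmorphM /= hornerM (rootP m0r) mulr0.
  by rewrite raddfB /= hornerD hornerN => /eqP; rewrite subr_eq0 => /eqP ->.
have f_add : zmod_morphism f.
  move=> x y; rewrite {1}(preK x) {1}(preK y) -hornerN -hornerD -raddfN -raddfD /=.
  by rewrite fE raddfB /= hornerD hornerN.
have f_mul : monoid_morphism f.
  split; first by have := fE 1; rewrite !rmorph1 !hornerC.
  move=> x y; rewrite {1}(preK x) {1}(preK y) -hornerM -rmorphM /=.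
  by rewrite fE rmorphM /= hornerM.
pose fA := GRing.isZmodMorphism.Build F K f f_add.
pose fM := GRing.isMonoidMorphism.Build F K f f_mul.
by exists (HB.pack f fA fM : {rmorphism F -> K}).
Qed.

Lemma int_free_rat_free (F : fieldExtType rat) n (theta : 'I_n -> F) :
  (forall c : 'I_n -> int, \sum_(i < n) (c i)%:~R * theta i = 0 -> forall i, c i = 0) ->
  forall c : 'I_n -> rat, \sum_(i < n) c i *: theta i = 0 -> forall i, c i = 0.
Proof.
move=> hfree c hc i.
pose d k := denq (c k); pose D := \prod_k d k.
pose c' k := numq (c k) * \prod_(l | l != k) d l.
have c'E k : ((c' k)%:~R : rat) = D%:~R * c k.
  by rewrite /c' /D [in RHS](bigD1 k) //= !intrM numqE /d; ring.
have : \sum_(k < n) (c' k)%:~R * theta k = 0.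
  have zE (k : int) (x : F) : k%:~R * x = (k%:~R : rat) *: x.
    by rewrite scaler_int mulrzl.
  under eq_bigr => k _ do rewrite zE c'E -scalerA.
  by rewrite -scaler_sumr hc scaler0.
move/hfree/(_ i)/eqP; rewrite mulf_eq0 numq_eq0 => /orP[/eqP //|].
by rewrite prodf_seq_eq0 => /hasP[l _ /andP[_]]; rewrite denq_eq0.
Qed.

Lemma rat_coef_matrix_unitmx (F : fieldExtType rat) n (theta : 'I_n -> F) (z : F)
    (P : 'I_n -> {poly rat}) :
  (forall k, size (P k) <= n)%nat ->
  (forall k, theta k = (map_poly (in_alg F) (P k)).[z]) ->
  (forall c : 'I_n -> rat, \sum_(i < n) c i *: theta i = 0 -> forall i, c i = 0) ->
  (\matrix_(l < n, k < n) (P k)`_l) \in unitmx.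
Proof.
move=> szP thetaE free; set T := \matrix_(l, k) _.
have thetaZ k : theta k = \sum_(l < n) (P k)`_l *: z ^+ l.
  rewrite thetaE (@horner_coef_wide _ n) ?size_map_poly //.
  by apply: eq_bigr => l _; rewrite coef_map mulr_algl.
rewrite -unitmx_tr unitmxE unitfE; apply/det0P => -[v nzv vT0].
apply/(negP nzv)/eqP/rowP => k; rewrite mxE; apply: free k.
under eq_bigr => k _ do rewrite thetaZ scaler_sumr.
rewrite exchange_big /= big1 // => l _; under eq_bigr => k _ do rewrite scalerA.
rewrite -scaler_suml; have /rowP/(_ l) := vT0; rewrite !mxE.
by under eq_bigr => k _ do rewrite !mxE; move=> ->; rewrite scale0r.
Qed.

Lemma embedding_matrix_unitmx (K : numClosedFieldType) (F : fieldExtType rat) n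
    (theta : 'I_n -> F) :
  \dim {:F} = n ->
  (forall c : 'I_n -> rat, \sum_(i < n) c i *: theta i = 0 -> forall i, c i = 0) ->
  exists sigma : 'I_n -> {rmorphism F -> K}, (\matrix_(j, k) sigma j (theta k)) \in unitmx.
Proof.
move=> dimF free.
have [z [m0 [Ez mon szm0 sepm0 m0E]]] := separable_generator_minpoly F.
rewrite dimF in szm0.
have [rs [szrs uniq_rs rsP]] := separable_poly_roots K mon szm0 sepm0.
pose r (j : 'I_n) := rs`_j.
have m0r j : root (map_poly ratr m0) (r j) by apply: rsP; rewrite mem_nth // szrs.
have [sigma sigmaE] :=
  fin_all_exists (fun j => rmorph_of_root Ez (fun P => (m0E P).1) (m0r j)).
have thetaP k : exists P : {poly rat},
    (size P <= n)%nat /\ theta k = (map_poly (in_alg F) P).[z].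
  have /Fadjoin1_polyP[P ->] : theta k \in <<1; z>>%VS by rewrite -Ez memvf.
  exists (P %% m0); split; first by rewrite -ltnS -szm0 ltn_modp monic_neq0.
  rewrite {1}(divp_eq P m0) rmorphD rmorphM /= hornerD hornerM.
  by rewrite ((m0E m0).2 (dvdpp m0)) mulr0 add0r.
have [P PP] := fin_all_exists thetaP.
pose Vd := \matrix_(j < n, l < n) r j ^+ l : 'M[K]_n.
exists sigma.
have -> : \matrix_(j, k) sigma j (theta k) = Vd *m map_mx ratr (\matrix_(l < n, k < n) (P k)`_l).
  apply/matrixP => j k; rewrite !mxE (PP k).2 sigmaE.
  rewrite (@horner_coef_wide _ n) ?size_map_poly ?(PP k).1 //.
  by apply: eq_bigr => l _; rewrite !mxE coef_map mulrC.
have thetaE k := (PP k).2.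
rewrite unitmx_mul map_unitmx (rat_coef_matrix_unitmx (fun k => (PP k).1) thetaE) // andbT.
have -> : Vd = (Vandermonde n (\row_j r j))^T by apply/matrixP => j l; rewrite !mxE.
rewrite unitmx_tr unitmxE unitfE det_Vandermonde.
apply/prodf_neq0 => i _; apply/prodf_neq0 => j lt_ij; rewrite !mxE subr_eq0.
by rewrite nth_uniq ?szrs //; apply: contraTneq lt_ij => ->; rewrite ltnn.
Qed.

Definition qnorm (K : comNzRingType) (A B : K) (w : 'I_4 -> K) : K :=
  w 0 ^+ 2 - A * w 1 ^+ 2 - B * w 2 ^+ 2 + A * B * w 3 ^+ 2.

Definition embed_coord (F : fieldType) (K : comNzRingType) n
    (sigma : {rmorphism F -> K}) (theta : 'I_n -> F) (v : 'I_(4 * n) -> K) :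
    'I_4 -> K :=
  fun c => \sum_(i < n) v (qvar c i) * sigma (theta i).

Lemma rmorph_mpoly_int_eq (K : comNzRingType) N (h1 h2 : {rmorphism {mpoly int[N]} -> K}) :
  (forall i, h1 'X_i = h2 'X_i) -> h1 =1 h2.
Proof.
move=> hX p; rewrite (mpolyE p) !rmorph_sum; apply: eq_bigr => m _.
rewrite -!mul_mpolyC !rmorphM -[p@_m]intz !rmorph_int; congr (_ * _).
by rewrite mpolyXE_id !rmorph_prod; apply: eq_bigr => i _; rewrite !rmorphXn hX.
Qed.

Lemma norm_components_eval (F : fieldType) (K : comNzRingType) n
    (sigma : {rmorphism F -> K}) (theta : 'I_n -> F) (a b : F)
    (g : 'I_n -> {mpoly int[4 * n]}) (v : 'I_(4 * n) -> K) :
  norm_components theta a b g ->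
  \sum_(k < n) (map_mpoly intr (g k)).@[v] * sigma (theta k) =
  qnorm (sigma a) (sigma b) (embed_coord sigma theta v).
Proof.
pose h : {rmorphism {mpoly F[4 * n]} -> K} := mmap sigma v.
have hC c : h c%:MP = sigma c by apply: mmapC.
have hX i : h 'X_i = v i by rewrite /h /= mmapX mmap1U.
have h_coord c : h (generic_coord theta c) = embed_coord sigma theta v c.
  by rewrite rmorph_sum; apply: eq_bigr => i _; rewrite rmorphM hC hX.
move=> hg; transitivity (h (generic_norm theta a b)); last first.
  by rewrite rmorphD !rmorphB !(rmorphM h) !hC !h_coord -!expr2 rmorphM.
rewrite -hg rmorph_sum; apply: eq_bigr => k _; rewrite rmorphM hC; congr (_ * _).
pose h1 : {rmorphism {mpoly int[4 * n]} -> K} := meval v \o map_mpoly intr.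
pose h2 : {rmorphism {mpoly int[4 * n]} -> K} := h \o map_mpoly intr.
apply: (@rmorph_mpoly_int_eq _ _ h1 h2) => i.
by rewrite /h1 /h2 /= !map_mpolyX mevalXU -hX.
Qed.

Section NormOneQuadric.
Variables (K : fieldType) (s B : K).
Hypotheses (s_neq0 : s != 0) (B_neq0 : B != 0) (two_neq0 : 2 != 0 :> K).

(* In the coordinates x + s y, z + s t, B (z - s t), x - s y the quadric
   qnorm (s ^+ 2) B w = 1 becomes SL_2, whose big cell is parametrised by
   [1 p; 0 1] [1 0; q 1] [1 r; 0 1] = [1 + p q, p + r + p q r; q, 1 + q r]. *)
Definition quadric_param (p q r : K) : 'I_4 -> K := fun c =>
  let al := 1 + p * q in let be := p + r + p * q * r in let de := 1 + q * r in
  match val c with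
  | 0 => (al + de) / 2
  | 1 => (al - de) / (2 * s)
  | 2 => (be + q / B) / 2
  | _ => (be - q / B) / (2 * s)
  end.

Lemma qnorm_quadric_param p q r : qnorm (s ^+ 2) B (quadric_param p q r) = 1.
Proof. by rewrite /qnorm /quadric_param /=; field; rewrite s_neq0 B_neq0 two_neq0. Qed.

Lemma quadric_param_entry01 p q r (w := quadric_param p q r) :
  w 2 + s * w 3 = p + r + p * q * r.
Proof. by rewrite /w /quadric_param /=; field; rewrite s_neq0 B_neq0 two_neq0. Qed.

Lemma quadric_param_entry10 p q r (w := quadric_param p q r) :
  B * (w 2 - s * w 3) = q.
Proof. by rewrite /w /quadric_param /=; field; rewrite s_neq0 B_neq0 two_neq0. Qed.

Lemma quadric_param_entry11 p q r (w := quadric_param p q r) :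
  w 0 - s * w 1 = 1 + q * r.
Proof. by rewrite /w /quadric_param /=; field; rewrite s_neq0 two_neq0. Qed.

End NormOneQuadric.

Lemma polyfun_quadric_param m (s B : CC) (kp kq kr : 'I_m) c :
  polyfun (fun u => quadric_param s B (u kp) (u kq) (u kr) c).
Proof.
have p := polyfun_proj kp; have q := polyfun_proj kq; have r := polyfun_proj kr.
have cst x := polyfun_const m x.
have al : polyfun (fun u => 1 + u kp * u kq) by apply: polyfun_add => //; apply: polyfun_mul.
have be : polyfun (fun u => u kp + u kr + u kp * u kq * u kr).
  by apply: polyfun_add; [apply: polyfun_add | apply: polyfun_mul => //; apply: polyfun_mul].
have de : polyfun (fun u => 1 + u kq * u kr) by apply: polyfun_add => //; apply: polyfun_mul.
have qB : polyfun (fun u => u kq / B) by apply: polyfun_mul.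
rewrite /quadric_param; case: (val c) => [|[|[|_]]] /=; apply: polyfun_mul => //.
- exact: polyfun_add.
- exact: polyfun_sub.
- exact: polyfun_add.
- exact: polyfun_sub.
Qed.

Lemma polyfun_embed_coord (F : fieldType) n (sigma : {rmorphism F -> CC})
    (theta : 'I_n -> F) c :
  polyfun (fun v => embed_coord sigma theta v c).
Proof.
by apply: polyfun_sum => i; apply: polyfun_mul; [apply: polyfun_proj | apply: polyfun_const].
Qed.

Lemma A_Gamma_closed n (g : 'I_n -> {mpoly int[4 * n]}) : zariski_closed (A_Gamma g).
Proof.
exists (fun p => exists k, p = map_mpoly intr (g k) - (if val k == O then 1 else 0)%:MP).
move=> v; split=> [vA _ [k ->]|vP k]; first by rewrite mevalB mevalC vA subrr.
by apply/eqP; rewrite -subr_eq0; have := vP _ (ex_intro _ k erefl); rewrite mevalB mevalC => ->.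
Qed.

Lemma pidx_lt n (j : 'I_n) (e : 'I_3) : (j * 3 + e < n * 3)%nat.
Proof. by have := ltn_ord j; have := ltn_ord e; lia. Qed.

Definition pidx n (j : 'I_n) (e : 'I_3) : 'I_(n * 3) := Ordinal (pidx_lt j e).

Lemma pidxP n (i : 'I_(n * 3)) : exists j e, i = pidx j e.
Proof.
have lt_i3 : (i %/ 3 < n)%nat by rewrite ltn_divLR.
exists (Ordinal lt_i3), (Ordinal (ltn_pmod i (isT : (0 < 3)%nat))).
by apply: val_inj; rewrite /= -divn_eq.
Qed.

Lemma trunc_params_pidx n (j : 'I_n) (e : 'I_3) k (u : 'I_(n * 3) -> CC) :
  trunc_params (j * 3 + k) u (pidx j e) = if (e < k)%nat then u (pidx j e) else 0.
Proof. by rewrite /trunc_params /= ltn_add2l. Qed.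

Definition param_p : 'I_3 := @Ordinal 3 0 isT.
Definition param_q : 'I_3 := @Ordinal 3 1 isT.
Definition param_r : 'I_3 := @Ordinal 3 2 isT.

Section NormOneLocus.
Variables (F : fieldExtType rat) (n : nat) (sigma : 'I_n -> {rmorphism F -> CC}).
Variables (theta : 'I_n -> F) (a b : F) (g : 'I_n -> {mpoly int[4 * n]}).
Hypotheses (a_neq0 : a != 0) (b_neq0 : b != 0).
Hypothesis theta0 : forall i : 'I_n, val i = O -> theta i = 1.
Hypothesis normg : norm_components theta a b g.

Let M : 'M[CC]_n := \matrix_(j, k) sigma j (theta k).
Hypothesis M_unit : M \in unitmx.

Lemma A_Gamma_of_qnorm v :
  (forall j, qnorm (sigma j a) (sigma j b) (embed_coord (sigma j) theta v) = 1) ->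
  A_Gamma g v.
Proof.
move=> normv; pose delta (k : 'I_n) : CC := if val k == O then 1 else 0.
pose e : 'cV[CC]_n := \col_k ((map_mpoly intr (g k)).@[v] - delta k).
suff Me : M *m e = 0.
  have e0 : e = 0 by rewrite -(mulKmx M_unit e) Me mulmx0.
  by move=> k; have /matrixP/(_ k 0)/eqP := e0; rewrite !mxE subr_eq0 => /eqP.
apply/matrixP => j i; rewrite (ord1 i) !mxE.
have n_gt0 : (0 < n)%nat by apply: leq_ltn_trans (ltn_ord j).
have M_delta : \sum_k M j k * delta k = 1.
  rewrite (bigD1 (Ordinal n_gt0)) //= big1 ?addr0 => [|k nk0].
    by rewrite /delta eqxx mxE theta0 // rmorph1 mulr1.
  by rewrite /delta; case: eqP => [k0|]; [case/eqP: nk0; apply: val_inj | rewrite mulr0].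
have M_g : \sum_k M j k * (map_mpoly intr (g k)).@[v] = 1.
  rewrite -[RHS](normv j) -(norm_components_eval _ _ normg).
  by apply: eq_bigr => k _; rewrite mxE mulrC.
under eq_bigr => k _ do rewrite [e _ _]mxE mulrBr.
by rewrite sumrB M_delta M_g subrr.
Qed.

Definition coords_of (W : 'M[CC]_(4, n)) : 'I_(4 * n) -> CC :=
  mxvec (W *m (invmx M)^T) 0.

Lemma embed_coord_coords_of W j c : embed_coord (sigma j) theta (coords_of W) c = W c j.
Proof.
have -> : W c j = ((W *m (invmx M)^T) *m M^T) c j.
  by rewrite -mulmxA -trmx_mul mulmxV // trmx1 mulmx1.
by rewrite mxE; apply: eq_bigr => i _; rewrite /coords_of /qvar mxvecE !mxE.
Qed.

Let s j := sqrtC (sigma j a).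

Definition param (u : 'I_(n * 3) -> CC) : 'I_(4 * n) -> CC :=
  coords_of (\matrix_(c, j) quadric_param (s j) (sigma j b)
    (u (pidx j param_p)) (u (pidx j param_q)) (u (pidx j param_r)) c).

Lemma embed_coord_param u j c :
  embed_coord (sigma j) theta (param u) c =
  quadric_param (s j) (sigma j b) (u (pidx j param_p)) (u (pidx j param_q))
    (u (pidx j param_r)) c.
Proof. by rewrite embed_coord_coords_of mxE. Qed.

Let s_neq0 j : s j != 0. Proof. by rewrite sqrtC_eq0 fmorph_eq0. Qed.
Let b_j_neq0 j : sigma j b != 0. Proof. by rewrite fmorph_eq0. Qed.
Let two_neq0 : 2 != 0 :> CC. Proof. by rewrite pnatr_eq0. Qed.

Lemma param_A_Gamma u : A_Gamma g (param u).
Proof.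
apply: A_Gamma_of_qnorm => j; rewrite /qnorm !embed_coord_param -(sqrtCK (sigma j a)).
exact: qnorm_quadric_param.
Qed.

Lemma polyfun_param l : polyfun (param^~ l).
Proof.
case/mxvec_indexP: l => c i; apply: polyfun_ext (polyfun_sum (fun j =>
  polyfun_mul (polyfun_quadric_param (s j) (sigma j b) (pidx j param_p)
     (pidx j param_q) (pidx j param_r) c) (polyfun_const _ ((invmx M)^T j i)))) => u.
by rewrite /param /coords_of mxvecE mxE; apply: eq_bigr => j _; rewrite !mxE.
Qed.

Lemma param_separation (i : 'I_(n * 3)) : exists f, [/\ polyfun f,
  forall u, f (param (trunc_params i u)) = 0 &
  f (param (trunc_params i.+1 (fun=> 1))) != 0].
Proof.
have [j [e ->]] := pidxP i.
have -> : nat_of_ord (pidx j e) = (j * 3 + e)%nat by [].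
rewrite -addnS; pose w v := embed_coord (sigma j) theta v.
have wP c : polyfun (w^~ c) by apply: polyfun_embed_coord.
have cst x : polyfun (fun _ : 'I_(4 * n) -> CC => x) by apply: polyfun_const.
have e01 := quadric_param_entry01 (s_neq0 j) (b_j_neq0 j) two_neq0.
have e10 := quadric_param_entry10 (s_neq0 j) (b_j_neq0 j) two_neq0.
have e11 := quadric_param_entry11 (sigma j b) (s_neq0 j) two_neq0.
case: e => -[|[|[|//]]] he /=.
- exists (fun v => w v 2 + s j * w v 3); split.
  + by apply: polyfun_add => //; apply: polyfun_mul.
  + by move=> u; rewrite /w !embed_coord_param e01 !trunc_params_pidx /= !mul0r !addr0.
  + by rewrite /w !embed_coord_param e01 !trunc_params_pidx /= !(mulr0, addr0) oner_neq0.
- exists (fun v => sigma j b * (w v 2 - s j * w v 3)); split.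
  + by apply: polyfun_mul => //; apply: polyfun_sub => //; apply: polyfun_mul.
  + by move=> u; rewrite /w !embed_coord_param e10 trunc_params_pidx.
  + by rewrite /w !embed_coord_param e10 trunc_params_pidx /= oner_neq0.
- exists (fun v => w v 0 - s j * w v 1 - 1); split.
  + by apply: polyfun_sub => //; apply: polyfun_sub => //; apply: polyfun_mul.
  + by move=> u; rewrite /w !embed_coord_param e11 !trunc_params_pidx /= mulr0 addr0 subrr.
  + by rewrite /w !embed_coord_param e11 !trunc_params_pidx /= mulr1 addrK oner_neq0.
Qed.

Lemma alg_dim_ge_A_Gamma : alg_dim_ge (A_Gamma g) (n * 3).
Proof.
apply: (alg_dim_ge_param polyfun_param (A_Gamma_closed g) param_A_Gamma).
exact: param_separation.
Qed.

End NormOneLocus.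

Theorem mainTheorem2 (n : nat) (F : fieldExtType rat)
  (hdeg : \dim (fullv : {vspace F}) = n)
  (htr : totally_real F)
  (a b : F) (ha : ring_of_integers a) (hb : ring_of_integers b)
  (ha0 : a != 0) (hb0 : b != 0)
  (hdiv : quat_division a b)
  (hram : exists sigma0 : {rmorphism F -> R},
      real_quat_iso_M2 (sigma0 a) (sigma0 b) /\
      forall sigma : {rmorphism F -> R},
        (exists x : F, sigma x <> sigma0 x) ->
        real_quat_iso_Hamilton (sigma a) (sigma b))
  (theta : 'I_n -> F) (htheta : Zbasis_of_integers theta)
  (htheta1 : forall i : 'I_n, val i = O -> theta i = 1)
  (g : 'I_n -> {mpoly int[4 * n]}) (hg : norm_components theta a b g) :
  alg_dim_ge (A_Gamma g) (3 * n).
Proof.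
have [_ _ /int_free_rat_free free] := htheta.
have [sigma M_unit] := embedding_matrix_unitmx CC hdeg free.
rewrite [(3 * n)%nat]mulnC; exact: alg_dim_ge_A_Gamma ha0 hb0 htheta1 hg M_unit.
Qed.
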